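(* Let $\Gamma\subset PGL_{2n+2}(\mathbb{C})$ be a group of type $\mathcal{L}$, and suppose the homogeneous coordinates $[z':z'']$ are such that there is $R>0$ with $V_R\subset\Omega(\Gamma)$ and $g(V_R)\cap V_R=\emptyset$ for every $g\in\Gamma\setminus\{1\}$. Then the set $\mathcal{R}=\{\|C_g^{-1}\|: g\in\Gamma\setminus\{1\}\}$ is bounded in $\mathbb{R}$ if and only if the closure $\bar F$ of the $F$-region contains $V_{R'}$ for some $R'>0$.
   Context: $z'=(z^0,\dots,z^n)$, $z''=(z^{n+1},\dots,z^{2n+1})$; $V_R=\{[z':z'']\in\mathbb{P}^{2n+1}:\|z'\|>R\|z''\|\}$; $\|\cdot\|$ is the Euclidean norm and the operator norm. Each $g\in\Gamma\setminus\{1\}$ has a representative $\begin{pmatrix}A_g&B_g\\C_g&D_g\end{pmatrix}\in SL_{2n+2}(\mathbb{C})$ with $(n+1)\times(n+1)$ blocks, and under the hypothesis $C_g$ is invertible (norms below do not depend on the choice of representative). Put $\bar\Delta_g=\{[z':z'']:\|z''\|\le\|C_gz'+D_gz''\|\}$, $\bar\Delta=\bigcap_{g\in\Gamma\setminus\{1\}}\bar\Delta_g$, and the $F$-region $F=\operatorname{Int}\bar\Delta$. Type $\mathcal{L}$: an $n$-plane is an $n$-dimensional projective linear subspace of $\mathbb{P}^{2n+1}$; with $\mathcal{G}\subset\mathbb{P}^N=\mathbb{P}(\Lambda^{n+1}\mathbb{C}^{2n+2})$ the Plücker-embedded Grassmannian, $\hat\ell$ the Plücker point of $\ell$ and $\hat\sigma$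 the induced action; the limit image of a sequence of distinct projective transformations whose representatives (normalized so the largest entry has absolute value $1$) converge to $T$ is $\mathbb{P}(\operatorname{Im}T)$; a sequence in discrete $\Gamma$ is normal if it is of distinct elements and both it and $(\hat\sigma_\nu)$ have convergent normalized representatives; limit $n$-planes are those $\ell$ with $\hat\ell$ in the limit image of some $(\hat\sigma_\nu)$, $(\sigma_\nu)$ normal; $\Omega(\Gamma)$ is the complement of their union; $\Gamma$ is of type $\mathcal{L}$ if discrete and $\Omega(\Gamma)$ contains a domain containing an $n$-plane. *)

From mathcomp Require Import all_boot all_order all_algebra.
From mathcomp Require Import complex.
From mathcomp Require Import classical_sets reals.
Set Implicit Arguments. Unset Strict Implicit. Unset Printing Implicit Defensive.
Import Order.TTheory GRing.Theory Num.Theory.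
Local Open Scope ring_scope.
Local Open Scope classical_set_scope.

Section Defs.
Variable R : realType.
Local Notation C := R[i].
Variable n : nat.

(* m = 2n+2 ; C^{2n+2} = C^{n+1} x C^{n+1}, z = (z', z'') *)
Local Notation m := (n.+1 + n.+1)%N.

Definition cabs (z : C) : R := Num.sqrt (@complex.Re R z ^+ 2 + @complex.Im R z ^+ 2).

Definition vnorm k (v : 'cV[C]_k) : R := Num.sqrt (\sum_i cabs (v i 0) ^+ 2).

Definition opnorm k (M : 'M[C]_k) : R :=
  sup [set r : R | exists v : 'cV[C]_k, vnorm v = 1 /\ r = vnorm (M *m v)].

Definition zp (z : 'cV[C]_m) : 'cV[C]_n.+1 := usubmx z.
Definition zpp (z : 'cV[C]_m) : 'cV[C]_n.+1 := dsubmx z.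

(* ---------- projective space P^{2n+1} ----------
   A subset X of P^{2n+1} is represented by its cone: the predicate on
   nonzero vectors z such that [z] is in X (scale invariant).  *)
Definition pset (X : set 'cV[C]_m) :=
  forall z c, X z -> c != 0 -> X (c *: z).

(* interior and closure in P^{2n+1} (computed on cones in C^m \ {0}, which
   is equivalent since C^m \ {0} -> P^{2n+1} is an open quotient map) *)
Definition pint (X : set 'cV[C]_m) : set 'cV[C]_m := fun z =>
  z != 0 /\ exists e : R, 0 < e /\
    forall w, w != 0 -> vnorm (w - z) < e -> X w.

Definition pclosure (X : set 'cV[C]_m) : set 'cV[C]_m := fun z =>
  z != 0 /\ forall e : R, 0 < e ->
    exists w, [/\ X w, w != 0 & vnorm (w - z) < e].

Definition popen (U : set 'cV[C]_m) := pset U /\ (forall z, U z -> pint U z).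

Definition pdomain (U : set 'cV[C]_m) :=
  [/\ popen U, exists z, U z &
      forall U1 U2, popen U1 -> popen U2 ->
        (forall z, U z <-> U1 z \/ U2 z) ->
        (forall z, ~ (U1 z /\ U2 z)) ->
        (forall z, ~ U1 z) \/ (forall z, ~ U2 z)].

Definition VR (r : R) : set 'cV[C]_m := fun z =>
  z != 0 /\ vnorm (zp z) > r * vnorm (zpp z).

(* ---------- n-planes and Plücker coordinates ----------
   An n-plane of P^{2n+1} is given by a (2n+2) x (n+1) matrix P of rank n+1
   (its columns span the corresponding (n+1)-dim. linear subspace). *)
Definition nplane (P : 'M[C]_(m, n.+1)) := \rank P = n.+1.

Definition on_plane (P : 'M[C]_(m, n.+1)) (z : 'cV[C]_m) :=
  z != 0 /\ exists c : 'cV[C]_n.+1, z = P *m c.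

(* Index set of the standard basis of Lambda^{n+1} C^{2n+2}:
   the (n+1)-element subsets of {0,...,2n+1}. *)
Definition Kidx := {S : {set 'I_m} | #|S| == n.+1}.

Definition i0 : 'I_m := lshift n.+1 (ord0 : 'I_n.+1).

Definition sel (S : Kidx) (i : 'I_n.+1) : 'I_m := nth i0 (enum (val S)) i.

(* Plücker point of the plane spanned by P (coordinates in the basis
   e_{i_0} /\ ... /\ e_{i_n}, i_0 < ... < i_n) *)
Definition plucker (P : 'M[C]_(m, n.+1)) : Kidx -> C :=
  fun S => \det (rowsub (sel S) P).

(* induced action sigma^ on Lambda^{n+1} C^{2n+2}: (n+1)-th compound matrix *)
Definition compound (A : 'M[C]_m) : Kidx -> Kidx -> C :=
  fun J I => \det (mxsub (sel J) (sel I) A).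

Definition normalized (I J : finType) (M : I -> J -> C) :=
  (forall i j, cabs (M i j) <= 1) /\ exists i j, cabs (M i j) = 1.

Definition mx_cvg (I J : finType) (M : nat -> I -> J -> C) (T : I -> J -> C) :=
  forall e : R, 0 < e -> exists N, forall k, (N <= k)%N ->
    forall i j, cabs (M k i j - T i j) < e.

(* ---------- the group Gamma ----------
   Gamma < PGL_{2n+2}(C) is represented by its preimage S in SL_{2n+2}(C),
   i.e. by the set of all SL-representatives of elements of Gamma. *)
Definition SL_preimage (S : set 'M[C]_m) :=
  [/\ forall A, S A -> \det A = 1,
      S 1%:M,
      forall A B, S A -> S B -> S (A *m B),
      forall A, S A -> S (invmx A) &
      forall w : C, w ^+ m = 1 -> S (w%:M)].

(* A represents the identity of PGL iff it is scalar *)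
Definition is_scalar (A : 'M[C]_m) := exists c : C, A = c%:M.

Definition proj_eq k l (A B : 'M[C]_(k, l)) := exists c : C, c != 0 /\ A = c *: B.

(* discreteness of Gamma in PGL_{2n+2}(C) (equivalently of its preimage in
   SL_{2n+2}(C), the covering SL -> PGL being finite): every element is
   isolated *)
Definition discrete (S : set 'M[C]_m) :=
  forall A, S A -> exists e : R, 0 < e /\
    forall B, S B -> (forall i j, cabs (B i j - A i j) < e) -> B = A.

(* a normal sequence of Gamma, together with the limits T (of normalized
   representatives of sigma_nu) and That (of normalized representatives of
   the induced maps sigma^_nu) *)
Definition normal_seq (S : set 'M[C]_m) (sigma : nat -> 'M[C]_m)
    (T : 'I_m -> 'I_m -> C) (That : Kidx -> Kidx -> C) :=
  [/\ forall k, S (sigma k),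
      forall k l, k <> l -> ~ proj_eq (sigma k) (sigma l),
      (exists M : nat -> 'I_m -> 'I_m -> C,
          [/\ forall k, exists c : C, c != 0 /\
                 forall i j, M k i j = c * sigma k i j,
              forall k, normalized (M k) &
              mx_cvg M T]) &
      (exists N : nat -> Kidx -> Kidx -> C,
          [/\ forall k, exists c : C, c != 0 /\
                 forall I J, N k I J = c * compound (sigma k) I J,
              forall k, normalized (N k) &
              mx_cvg N That])].

(* limit image P(Im T) contains the point with coordinates x (x != 0) *)
Definition in_limit_image (That : Kidx -> Kidx -> C) (x : Kidx -> C) :=
  exists w : Kidx -> C, forall J, x J = \sum_I That J I * w I.

Definition limit_plane (S : set 'M[C]_m) (P : 'M[C]_(m, n.+1)) :=
  nplane P /\ exists sigma T That,
    normal_seq S sigma T That /\ in_limit_image That (plucker P).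

Definition Omega (S : set 'M[C]_m) : set 'cV[C]_m := fun z =>
  z != 0 /\ ~ exists P, limit_plane S P /\ on_plane P z.

Definition typeL (S : set 'M[C]_m) :=
  discrete S /\ exists U, [/\ pdomain U, (forall z, U z -> Omega S z) &
     exists P, nplane P /\ forall z, on_plane P z -> U z].

Definition Cblk (A : 'M[C]_m) : 'M[C]_n.+1 := dlsubmx A.
Definition Dblk (A : 'M[C]_m) : 'M[C]_n.+1 := drsubmx A.

Definition Delta_g (A : 'M[C]_m) : set 'cV[C]_m := fun z =>
  z != 0 /\ vnorm (zpp z) <= vnorm (Cblk A *m zp z + Dblk A *m zpp z).

Definition Delta (S : set 'M[C]_m) : set 'cV[C]_m := fun z =>
  z != 0 /\ forall A, S A -> ~ is_scalar A -> Delta_g A z.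

Definition Fregion (S : set 'M[C]_m) : set 'cV[C]_m := pint (Delta S).

End Defs.

From mathcomp Require Import all_boot all_order all_algebra.
From mathcomp Require Import complex.
From mathcomp Require Import classical_sets reals.
From mathcomp Require Import ring lra.
Set Implicit Arguments. Unset Strict Implicit. Unset Printing Implicit Defensive.
Import Order.TTheory GRing.Theory Num.Theory.
Local Open Scope ring_scope.
Local Open Scope classical_set_scope.

(* Write K_g = C_g^-1 D_g.  Disjointness of V_R from its translates forces
   C_g to be invertible (a kernel vector x of C_g would put both [x : 0] and
   g[x : 0] in V_R) and ||K_g|| <= R (apply the hypothesis to g^-1 at the point
   g[-K_g u : u], whose second half vanishes).  As C_g z' + D_g z'' equals
   C_g (z' + K_g z''), every point of V_(R + ||C_g^-1||) lies in bar Delta_g, so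
   a uniform bound B puts the open cone V_(R + B) inside bar Delta, hence inside
   F.  Conversely each bar Delta_g is closed, so V_R' <= closure F forces
   V_R' <= bar Delta_g; testing this at [s - K_g u : u] with u = s / rho,
   rho > R + R', gives ||s|| <= rho ||C_g s||, i.e. ||C_g^-1|| <= rho. *)

Lemma cauchy_schwarz (R : realDomainType) k (f g : 'I_k -> R) :
  (\sum_i f i * g i) ^+ 2 <= (\sum_i f i ^+ 2) * (\sum_i g i ^+ 2).
Proof.
have lagrange : \sum_i \sum_j (f i * g j - f j * g i) ^+ 2 =
    ((\sum_i f i ^+ 2) * (\sum_i g i ^+ 2) - (\sum_i f i * g i) ^+ 2) *+ 2.
  have E i j : (f i * g j - f j * g i) ^+ 2 =
      f i ^+ 2 * g j ^+ 2 + f j ^+ 2 * g i ^+ 2 - (f i * g i * (f j * g j)) *+ 2.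
    by ring.
  under eq_bigr => i _ do under eq_bigr => j _ do rewrite E.
  rewrite expr2 !big_distrlr /= mulrnBl mulr2n.
  rewrite [X in _ + X - _]exchange_big -big_split -sumrMnl -sumrB /=.
  by apply: eq_bigr => i _; rewrite -big_split -sumrMnl -sumrB.
have : 0 <= \sum_i \sum_j (f i * g j - f j * g i) ^+ 2.
  by apply: sumr_ge0 => i _; apply: sumr_ge0 => j _; exact: sqr_ge0.
by rewrite lagrange pmulrn_lge0 // subr_ge0.
Qed.

Lemma minkowski (R : rcfType) k (f g : 'I_k -> R) :
  Num.sqrt (\sum_i (f i + g i) ^+ 2) <=
  Num.sqrt (\sum_i f i ^+ 2) + Num.sqrt (\sum_i g i ^+ 2).
Proof.
have sumsq_ge0 (h : 'I_k -> R) : 0 <= \sum_i h i ^+ 2.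
  by apply: sumr_ge0 => i _; exact: sqr_ge0.
have cs : \sum_i f i * g i <=
    Num.sqrt (\sum_i f i ^+ 2) * Num.sqrt (\sum_i g i ^+ 2).
  rewrite -sqrtrM // (le_trans (ler_norm _)) // -sqrtr_sqr.
  exact/ler_wsqrtr/cauchy_schwarz.
rewrite -(@ler_pXn2r _ 2) ?nnegrE ?addr_ge0 ?sqrtr_ge0 //.
rewrite sqrrD !sqr_sqrtr //; under eq_bigr do rewrite sqrrD.
by rewrite !big_split /= lerD2r lerD2l mulr2n lerD.
Qed.

Section EuclideanNorm.
Variable R : realType.
Local Notation C := R[i].
Implicit Types (k p : nat) (x y : C).

Lemma cabsE x : cabs x = Normc.normc x.
Proof. by case: x. Qed.

Lemma cabs_ge0 x : 0 <= cabs x.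
Proof. exact: sqrtr_ge0. Qed.

Lemma cabs0 : cabs (0 : C) = 0.
Proof. by rewrite cabsE Normc.normc0. Qed.

Lemma cabs_eq0 x : cabs x = 0 -> x = 0.
Proof. by rewrite cabsE; exact: Normc.eq0_normc. Qed.

Lemma cabsD x y : cabs (x + y) <= cabs x + cabs y.
Proof. by rewrite !cabsE; exact: le_normcD. Qed.

Lemma cabsM x y : cabs (x * y) = cabs x * cabs y.
Proof. by rewrite !cabsE Normc.normcM. Qed.

Lemma cabsN x : cabs (- x) = cabs x.
Proof. by rewrite !cabsE normcN. Qed.

Lemma cabsR (a : R) : cabs a%:C%C = `|a|.
Proof. by rewrite /cabs /= expr0n /= addr0 sqrtr_sqr. Qed.

Lemma vnorm_ge0 k (v : 'cV[C]_k) : 0 <= vnorm v.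
Proof. exact: sqrtr_ge0. Qed.

Lemma sqr_vnorm k (v : 'cV[C]_k) : vnorm v ^+ 2 = \sum_i cabs (v i 0) ^+ 2.
Proof. by rewrite sqr_sqrtr // sumr_ge0 // => i _; exact: sqr_ge0. Qed.

Lemma vnorm0 k : vnorm (0 : 'cV[C]_k) = 0.
Proof. by rewrite /vnorm big1 ?sqrtr0 // => i _; rewrite mxE cabs0 expr0n. Qed.

Lemma vnorm_eq0 k (v : 'cV[C]_k) : vnorm v = 0 -> v = 0.
Proof.
move=> v0; have : vnorm v ^+ 2 = 0 by rewrite v0 expr0n.
rewrite sqr_vnorm => /eqP; rewrite psumr_eq0 => [/allP v_eq0|i _]; last first.
  exact: sqr_ge0.
apply/matrixP => i j; rewrite (ord1 j) mxE; apply: cabs_eq0.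
by apply/eqP; rewrite -sqrf_eq0; exact: v_eq0 (mem_index_enum i).
Qed.

Lemma vnorm_gt0 k (v : 'cV[C]_k) : v != 0 -> 0 < vnorm v.
Proof.
move=> v_neq0; rewrite lt_def vnorm_ge0 andbT.
by apply: contraNneq v_neq0 => /vnorm_eq0 ->.
Qed.

Lemma vnormZ k x (v : 'cV[C]_k) : vnorm (x *: v) = cabs x * vnorm v.
Proof.
rewrite /vnorm (eq_bigr (fun i => cabs x ^+ 2 * cabs (v i 0) ^+ 2)); last first.
  by move=> i _; rewrite mxE cabsM exprMn.
by rewrite -mulr_sumr sqrtrM ?sqr_ge0 // sqrtr_sqr ger0_norm // cabs_ge0.
Qed.

Lemma vnormN k (v : 'cV[C]_k) : vnorm (- v) = vnorm v.
Proof. by rewrite /vnorm; congr Num.sqrt; apply: eq_bigr => i _; rewrite mxE cabsN. Qed.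

Lemma vnormD k (u v : 'cV[C]_k) : vnorm (u + v) <= vnorm u + vnorm v.
Proof.
apply: le_trans (minkowski (fun i => cabs (u i 0)) (fun i => cabs (v i 0))).
rewrite ler_sqrt; last by apply: sumr_ge0 => i _; exact: sqr_ge0.
apply: ler_sum => i _; rewrite mxE.
by rewrite ler_sqr ?nnegrE ?addr_ge0 ?cabs_ge0 ?cabsD.
Qed.

Lemma vnorm_lerB k (u v : 'cV[C]_k) : vnorm u - vnorm v <= vnorm (u - v).
Proof. by rewrite lerBlDr -{1}(subrK v u) vnormD. Qed.

Lemma vnorm_sum k p (F : 'I_p -> 'cV[C]_k) :
  vnorm (\sum_j F j) <= \sum_j vnorm (F j).
Proof.
elim/big_ind2: _ => [|u1 u2 a1 a2 le1 le2|//]; first by rewrite vnorm0.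
exact: le_trans (vnormD _ _) (lerD le1 le2).
Qed.

Lemma cabs_le_vnorm k (v : 'cV[C]_k) i : cabs (v i 0) <= vnorm v.
Proof.
rewrite -(@ler_pXn2r _ 2) ?nnegrE ?cabs_ge0 ?vnorm_ge0 // sqr_vnorm.
by rewrite (bigD1 i) //= lerDl; apply: sumr_ge0 => j _; exact: sqr_ge0.
Qed.

Lemma vnorm_mulmx_bound k p (M : 'M[C]_(p, k)) :
  exists2 K, 0 <= K & forall v, vnorm (M *m v) <= K * vnorm v.
Proof.
exists (\sum_j vnorm (col j M)) => [|v].
  by apply: sumr_ge0 => j _; exact: vnorm_ge0.
have -> : M *m v = \sum_j v j 0 *: col j M.
  apply/matrixP => i l; rewrite (ord1 l) !mxE summxE.
  by apply: eq_bigr => j _; rewrite !mxE mulrC.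
apply: le_trans (vnorm_sum _) _; rewrite mulr_suml; apply: ler_sum => j _.
by rewrite vnormZ mulrC ler_wpM2l ?vnorm_ge0 ?cabs_le_vnorm.
Qed.

Lemma sqr_vnorm_col_mx k1 k2 (a : 'cV[C]_k1) (b : 'cV[C]_k2) :
  vnorm (col_mx a b) ^+ 2 = vnorm a ^+ 2 + vnorm b ^+ 2.
Proof.
rewrite !sqr_vnorm big_split_ord /=.
by congr (_ + _); apply: eq_bigr => i _; rewrite ?col_mxEu ?col_mxEd.
Qed.

Lemma vnorm_usubmx k1 k2 (z : 'cV[C]_(k1 + k2)) : vnorm (usubmx z) <= vnorm z.
Proof.
rewrite -[z in X in _ <= X]vsubmxK -(@ler_pXn2r _ 2) ?nnegrE ?vnorm_ge0 //.
by rewrite sqr_vnorm_col_mx lerDl sqr_ge0.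
Qed.

Lemma vnorm_dsubmx k1 k2 (z : 'cV[C]_(k1 + k2)) : vnorm (dsubmx z) <= vnorm z.
Proof.
rewrite -[z in X in _ <= X]vsubmxK -(@ler_pXn2r _ 2) ?nnegrE ?vnorm_ge0 //.
by rewrite sqr_vnorm_col_mx lerDr sqr_ge0.
Qed.

Lemma vnorm_normalize k (v : 'cV[C]_k) : v != 0 ->
  vnorm ((vnorm v)^-1%:C%C *: v) = 1.
Proof.
move=> /vnorm_gt0 v_gt0.
by rewrite vnormZ cabsR ger0_norm ?invr_ge0 ?vnorm_ge0 // mulVf // gt_eqF.
Qed.

Lemma vnorm_mulmx_le_opnorm k (M : 'M[C]_k) v :
  vnorm (M *m v) <= opnorm M * vnorm v.
Proof.
have [->|v_neq0] := eqVneq v 0; first by rewrite mulmx0 !vnorm0 mulr0.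
have [K _ MK] := vnorm_mulmx_bound M.
have ub : has_ubound [set a | exists u : 'cV[C]_k, vnorm u = 1 /\ a = vnorm (M *m u)].
  by exists K => _ [u [u1 ->]]; have := MK u; rewrite u1 mulr1.
have v_gt0 := vnorm_gt0 v_neq0.
have := ub_le_sup ub (ex_intro _ _ (conj (vnorm_normalize v_neq0) erefl)).
rewrite -scalemxAr vnormZ cabsR ger0_norm ?invr_ge0 ?vnorm_ge0 //.
by rewrite mulrC ler_pdivrMr.
Qed.

Lemma exists_vnorm1 k : exists v : 'cV[C]_k.+1, vnorm v = 1.
Proof.
have e0_neq0 : (delta_mx 0 0 : 'cV[C]_k.+1) != 0.
  by apply/negP => /eqP/matrixP/(_ 0 0)/eqP; rewrite !mxE eqxx oner_eq0.
by eexists; exact: vnorm_normalize e0_neq0.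
Qed.

Lemma nonunitmx_ker k (M : 'M[C]_k) :
  M \notin unitmx -> exists2 x : 'cV[C]_k, x != 0 & M *m x = 0.
Proof.
rewrite unitmxE unitfE negbK -det_tr => /det0P [v v_neq0 vM0].
by exists v^T; rewrite ?trmx_eq0 // -[M]trmxK -trmx_mul vM0 trmx0.
Qed.

Lemma opnorm_ge0 k (M : 'M[C]_k.+1) : 0 <= opnorm M.
Proof.
have [v v1] := exists_vnorm1 k.
by have := vnorm_mulmx_le_opnorm M v; rewrite v1 mulr1; exact/le_trans/vnorm_ge0.
Qed.

Lemma opnorm_le k (M : 'M[C]_k.+1) B :
  (forall v, vnorm (M *m v) <= B * vnorm v) -> opnorm M <= B.
Proof.
move=> MB; apply: ge_sup => [|_ [v [v1 ->]]]; last by have := MB v; rewrite v1 mulr1.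
by have [v v1] := exists_vnorm1 k; exists (vnorm (M *m v)), v.
Qed.

Lemma vnorm_le_opnorm_invmx k (M : 'M[C]_k) v : M \in unitmx ->
  vnorm v <= opnorm (invmx M) * vnorm (M *m v).
Proof. by move=> M_unit; rewrite -{1}(mulKmx M_unit v) vnorm_mulmx_le_opnorm. Qed.

Lemma opnorm_invmx_le k (M : 'M[C]_k.+1) B : M \in unitmx ->
  (forall v, vnorm v <= B * vnorm (M *m v)) -> opnorm (invmx M) <= B.
Proof.
by move=> M_unit MB; apply: opnorm_le => v; have := MB (invmx M *m v); rewrite mulKVmx.
Qed.

End EuclideanNorm.

Section ProjectiveSets.
Variables (R : realType) (n : nat).
Local Notation C := R[i].
Local Notation m := (n.+1 + n.+1)%N.
Implicit Types (z w : 'cV[C]_m) (X Y : set 'cV[C]_m).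

Lemma zp_col_mx (a b : 'cV[C]_n.+1) : zp (col_mx a b) = a.
Proof. exact: col_mxKu. Qed.

Lemma zpp_col_mx (a b : 'cV[C]_n.+1) : zpp (col_mx a b) = b.
Proof. exact: col_mxKd. Qed.

Lemma zpB z w : zp (z - w) = zp z - zp w.
Proof. exact: linearB. Qed.

Lemma zppB z w : zpp (z - w) = zpp z - zpp w.
Proof. exact: linearB. Qed.

Lemma zpp_mulmx (A : 'M[C]_m) z : zpp (A *m z) = Cblk A *m zp z + Dblk A *m zpp z.
Proof.
by rewrite /zpp -mul_dsub_mx -[dsubmx A]hsubmxK -[z in _ *m z]vsubmxK mul_row_col.
Qed.

Lemma VR_zpp0 r z : z != 0 -> zpp z = 0 -> VR r z.
Proof.
move=> z_neq0 z''0; split => //; rewrite z''0 vnorm0 mulr0 vnorm_gt0 //.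
apply: contraNneq z_neq0 => z'0.
by rewrite -[z]vsubmxK -/(zp z) -/(zpp z) z'0 z''0 col_mx0.
Qed.

Lemma le_VR (r1 r2 : R) : r1 <= r2 -> VR (n := n) r2 `<=` VR r1.
Proof.
move=> le_r z [z_neq0 Vz]; split => //.
exact: le_lt_trans (ler_wpM2r (vnorm_ge0 _) le_r) Vz.
Qed.

Lemma VR_pint r z : 0 <= r -> VR r z -> pint (VR r) z.
Proof.
move=> r_ge0 [z_neq0 Vz]; split => //.
have r1_gt0 : 0 < 1 + r by rewrite ltr_pwDl.
exists ((vnorm (zp z) - r * vnorm (zpp z)) / (1 + r)).
split=> [|w w_neq0 wz]; first by rewrite divr_gt0 // subr_gt0.
split => //.
have dzp : vnorm (zp z) - vnorm (zp w) <= vnorm (w - z).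
  rewrite -[vnorm (w - z)]vnormN opprB.
  by apply: le_trans (vnorm_lerB _ _) _; rewrite -zpB vnorm_usubmx.
have dzpp : vnorm (zpp w) - vnorm (zpp z) <= vnorm (w - z).
  by apply: le_trans (vnorm_lerB _ _) _; rewrite -zppB vnorm_dsubmx.
rewrite ltr_pdivlMr // in wz.
nra.
Qed.

Lemma pint_subset X : pint X `<=` X.
Proof. by move=> z [z_neq0 [e [e_gt0 /(_ z z_neq0)]]]; rewrite subrr vnorm0; apply. Qed.

Lemma pintS X Y : X `<=` Y -> pint X `<=` pint Y.
Proof.
move=> XY z [z_neq0 [e [e_gt0 Xball]]]; split=> //.
by exists e; split=> // w *; apply/XY/Xball.
Qed.

Lemma pclosureS X Y : X `<=` Y -> pclosure X `<=` pclosure Y.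
Proof.
move=> XY z [z_neq0 Xnear]; split=> // e /Xnear [w [Xw w_neq0 wz]].
by exists w; split=> //; apply: XY.
Qed.

Lemma subset_pclosure X z : X z -> z != 0 -> pclosure X z.
Proof. by move=> Xz z_neq0; split=> // e e_gt0; exists z; rewrite subrr vnorm0. Qed.

Lemma pclosure_Delta_g (A : 'M[C]_m) : pclosure (Delta_g A) `<=` Delta_g A.
Proof.
move=> z [z_neq0 Dnear]; split => //; rewrite -zpp_mulmx.
have [L L_ge0 AL] := vnorm_mulmx_bound (dsubmx A).
rewrite leNgt; apply/negP => ltAz.
have L1_gt0 : 0 < 1 + L by rewrite ltr_pwDl.
have [|w [[_ Dw] w_neq0 wz]] :=
  Dnear ((vnorm (zpp z) - vnorm (zpp (A *m z))) / (1 + L)).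
  by rewrite divr_gt0 // subr_gt0.
rewrite -zpp_mulmx in Dw; rewrite ltr_pdivlMr // in wz.
have dzpp : vnorm (zpp z) - vnorm (zpp w) <= vnorm (w - z).
  rewrite -[vnorm (w - z)]vnormN opprB.
  by apply: le_trans (vnorm_lerB _ _) _; rewrite -zppB vnorm_dsubmx.
have dAzpp : vnorm (zpp (A *m w)) - vnorm (zpp (A *m z)) <= L * vnorm (w - z).
  by apply: le_trans (vnorm_lerB _ _) _; rewrite -zppB -mulmxBr /zpp -mul_dsub_mx.
nra.
Qed.

End ProjectiveSets.

Section DisjointTranslates.
Variables (R : realType) (n : nat).
Local Notation C := R[i].
Local Notation m := (n.+1 + n.+1)%N.
Variables (S : set 'M[C]_m) (r : R).
Hypothesis SL_S : SL_preimage S.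
Hypothesis VR_disjoint :
  forall A, S A -> ~ is_scalar A -> forall z, VR r z -> ~ VR r (A *m z).
Implicit Types (A : 'M[C]_m) (z : 'cV[C]_m).

Lemma S_unitmx A : S A -> A \in unitmx.
Proof. by case: SL_S => detS _ _ _ _ /detS detA; rewrite unitmxE detA unitr1. Qed.

Lemma S_invmx A : S A -> ~ is_scalar A -> S (invmx A) /\ ~ is_scalar (invmx A).
Proof.
case: SL_S => _ _ _ invS _ SA A_nscalar; split; first exact: invS.
by case=> c Ac; apply: A_nscalar; exists c^-1; rewrite -[A]invmxK Ac invmx_scalar.
Qed.

Lemma S_mulmx_neq0 A z : S A -> z != 0 -> A *m z != 0.
Proof.
move=> SA; apply: contraNneq => Az0.
by rewrite -(mulKmx (S_unitmx SA) z) Az0 mulmx0.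
Qed.

Lemma Cblk_unitmx A : S A -> ~ is_scalar A -> Cblk A \in unitmx.
Proof.
move=> SA A_nscalar; apply: contraT => /nonunitmx_ker [x x_neq0 Cx0].
have z_neq0 : col_mx x (0 : 'cV[C]_n.+1) != 0 by rewrite col_mx_eq0 negb_and x_neq0.
elim: (VR_disjoint SA A_nscalar (VR_zpp0 r z_neq0 (zpp_col_mx _ _))).
apply: VR_zpp0; first exact: S_mulmx_neq0.
by rewrite zpp_mulmx zp_col_mx zpp_col_mx Cx0 mulmx0 addr0.
Qed.

Lemma vnorm_invCblk_Dblk_le A u : S A -> ~ is_scalar A ->
  vnorm (invmx (Cblk A) *m Dblk A *m u) <= r * vnorm u.
Proof.
move=> SA A_nscalar.
have [->|u_neq0] := eqVneq u 0; first by rewrite mulmx0 !vnorm0 mulr0.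
set Ku := invmx (Cblk A) *m Dblk A *m u.
have z_neq0 : col_mx (- Ku) u != 0 by rewrite col_mx_eq0 negb_and u_neq0 orbT.
have VAz : VR r (A *m col_mx (- Ku) u).
  apply: VR_zpp0; first exact: S_mulmx_neq0.
  rewrite zpp_mulmx zp_col_mx zpp_col_mx mulmxN /Ku -!mulmxA.
  by rewrite mulKVmx ?Cblk_unitmx // addNr.
have [SA' A'_nscalar] := S_invmx SA A_nscalar.
have := VR_disjoint SA' A'_nscalar VAz; rewrite mulKmx ?S_unitmx // => Vz_false.
rewrite leNgt; apply/negP => ltKu; apply: Vz_false; split => //.
by rewrite zp_col_mx zpp_col_mx vnormN.
Qed.

Lemma VR_sub_Delta_g A z : S A -> ~ is_scalar A ->
  VR (r + opnorm (invmx (Cblk A))) z -> Delta_g A z.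
Proof.
move=> SA A_nscalar [z_neq0 Vz]; split => //.
set B := opnorm (invmx (Cblk A)) in Vz *.
have B_ge0 : 0 <= B := opnorm_ge0 _.
set x := zp z + invmx (Cblk A) *m Dblk A *m zpp z.
have Cx : Cblk A *m x = Cblk A *m zp z + Dblk A *m zpp z.
  by rewrite mulmxDr -!mulmxA mulKVmx ?Cblk_unitmx.
have x_ge : vnorm (zp z) - r * vnorm (zpp z) <= vnorm x.
  have := vnorm_lerB (zp z) (- (invmx (Cblk A) *m Dblk A *m zpp z)).
  rewrite opprK vnormN; apply: le_trans.
  by rewrite lerD2l lerN2 vnorm_invCblk_Dblk_le.
have x_le : vnorm x <= B * vnorm (Cblk A *m x).
  exact/vnorm_le_opnorm_invmx/Cblk_unitmx.
rewrite -Cx leNgt; apply/negP => ltCx.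
have := ler_wpM2l B_ge0 (ltW ltCx); nra.
Qed.

Lemma vnorm_le_Cblk A (r' rho : R) : S A -> ~ is_scalar A ->
  0 < rho -> r + r' < rho -> (forall z, VR r' z -> Delta_g A z) ->
  forall s, vnorm s <= rho * vnorm (Cblk A *m s).
Proof.
move=> SA A_nscalar rho_gt0 lt_rho Delta_VR s.
have [->|s_neq0] := eqVneq s 0; first by rewrite mulmx0 !vnorm0 mulr0.
set u := rho^-1%:C%C *: s.
have s_u : vnorm s = rho * vnorm u.
  by rewrite vnormZ cabsR gtr0_norm ?invr_gt0 // mulVKf // gt_eqF.
have u_gt0 : 0 < vnorm u.
  by have := vnorm_gt0 s_neq0; rewrite s_u pmulr_rgt0.
set Ku := invmx (Cblk A) *m Dblk A *m u.
have u_neq0 : u != 0 by apply: contraTneq u_gt0 => ->; rewrite vnorm0 ltxx.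
have z_neq0 : col_mx (s - Ku) u != 0 by rewrite col_mx_eq0 negb_and u_neq0 orbT.
have Vz : VR r' (col_mx (s - Ku) u).
  split => //; rewrite zp_col_mx zpp_col_mx.
  apply: lt_le_trans (vnorm_lerB _ _).
  have := vnorm_invCblk_Dblk_le u SA A_nscalar; rewrite -/Ku; nra.
have [_] := Delta_VR _ Vz; rewrite zp_col_mx zpp_col_mx mulmxBr /Ku -!mulmxA.
by rewrite mulKVmx ?Cblk_unitmx // subrK s_u ler_pM2l.
Qed.

End DisjointTranslates.

Theorem proposition7p6 (R : realType) (n : nat)
    (S : set 'M[R[i]]_(n.+1 + n.+1)) (r : R) :
  SL_preimage S -> typeL S ->
  0 < r ->
  (forall z, VR r z -> Omega S z) ->
  (forall A, S A -> ~ is_scalar A -> forall z, VR r z -> ~ VR r (A *m z)) ->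
  (exists B : R, forall A, S A -> ~ is_scalar A ->
      opnorm (invmx (Cblk A)) <= B)
  <->
  (exists r' : R, 0 < r' /\
      forall z, VR r' z -> pclosure (Fregion S) z).
Proof.
move=> SL_S _ r_gt0 _ VR_disjoint; split=> [[B opnorm_le_B]|[r' [r'_gt0 VR_closure]]].
  have r'_ge0 : 0 <= r + `|B| := addr_ge0 (ltW r_gt0) (normr_ge0 B).
  have VR_Delta : VR (r + `|B|) `<=` Delta S.
    move=> w Vw; split=> [|A SA A_nscalar]; first by case: Vw.
    apply: (VR_sub_Delta_g SL_S VR_disjoint SA A_nscalar); apply: le_VR Vw.
    by rewrite lerD2l (le_trans (opnorm_le_B A SA A_nscalar)) ?ler_norm.
  exists (r + `|B|); split=> [|z Vz]; first by rewrite ltr_wpDr.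
  apply: subset_pclosure; last by case: Vz.
  exact: pintS VR_Delta _ (VR_pint r'_ge0 Vz).
exists (r + r' + 1) => A SA A_nscalar.
apply: (opnorm_invmx_le (Cblk_unitmx SL_S VR_disjoint SA A_nscalar)).
apply: (vnorm_le_Cblk (r' := r') SL_S VR_disjoint SA A_nscalar); try lra.
move=> z /VR_closure /(pclosureS _) Delta_z; apply/pclosure_Delta_g/Delta_z.
by move=> w /pint_subset [_ Delta_w]; exact: Delta_w.
Qed.
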